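(* For $n\ge1$ and $0\le k<n$, \[ a_{n,k}=na_{n-1,k-1}+\frac{n(n-1)}{n-k}a_{n-1,k}, \] and for $n\ge2$ and $0\le k<n$, \[ b_{n,k}=nb_{n-1,k-1}+\frac{n(n-1)}{n-k}b_{n-1,k}. \] For $n\ge1$ and $0\le k\le n$, $a_{n,k}=b_{n,k}+(n-k+1)a_{n,k-1}$. For $n\ge1$, \[ b_{n,n}=na_{n-1,n-1}+\sum_{k=1}^{n-1}\binom{n-1}{k}\,k\,b_{k,k}\,a_{n-k-1,n-k-1}. \]
   Context: Let $A$ be the ring of formal series $\sum_{n\ge0}q_n(y)x^{-n}$, each $q_n$ a complex polynomial of degree at most $n$, with termwise formal derivatives $a_x=-\sum_{n\ge1}nq_n(y)x^{-n-1}$, $a_y=\sum_{n\ge1}q_n'(y)x^{-n}$, and formal logarithm $\log(1+u)=\sum_{k\ge1}(-1)^{k+1}u^k/k$. Let $V\in A$ be the unique solution of $V=1+\frac{y}{x}-\frac{1}{x}V-V_x-\frac{1}{x}V_y+\frac{1}{x}\log V$, and define $P_{n-1},Q_n$ by $V=1+\sum_{n\ge1}P_{n-1}(y)x^{-n}$, $\log V=\sum_{n\ge1}Q_n(y)x^{-n}$. For $n\ge1$ define coefficients $a_{n,k},b_{n,k}$ ($0\le k\le n$) by $P_n(y)=\frac{(-1)^{n+1}}{n!}\sum_{k=0}^n(-1)^ka_{n,k}y^{n-k}$ and $Q_n(y)=\frac{(-1)^{n+1}}{n!}\sum_{k=0}^n(-1)^kb_{n,k}y^{n-k}$. Conventions: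 for $n\ge1$, $a_{n,k}=b_{n,k}=0$ when $k<0$ or $k>n$; and $a_{0,0}=1$, $a_{0,-1}=1$, $a_{0,k}=0$ for other $k$ (so that $P_0(y)=y-1=-\sum_{k=-1}^0(-1)^ka_{0,k}y^{-k}$). *)

From HB Require Import structures.
From mathcomp Require Import all_boot all_order all_algebra.
From mathcomp Require Import reals.
From mathcomp.real_closed Require Import complex.
Set Implicit Arguments. Unset Strict Implicit. Unset Printing Implicit Defensive.
Import Order.TTheory GRing.Theory Num.Theory.
Local Open Scope ring_scope.

Section Series.
Variable C : fieldType.

(* A formal series  sum_{n>=0} q_n(y) x^{-n}  is represented by n |-> q_n. *)
Definition ser := nat -> {poly C}.

Definition in_A (s : ser) : Prop := forall n, (size (s n) <= n.+1)%N.

Definition ser_one : ser := fun n => if n is 0 then 1 else 0.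
Definition ser_y_over_x : ser := fun n => if n == 1%N then 'X else 0.
Definition ser_add (s t : ser) : ser := fun n => s n + t n.
Definition ser_opp (s : ser) : ser := fun n => - s n.
Definition ser_scale (c : C) (s : ser) : ser := fun n => c *: s n.
Definition ser_mul (s t : ser) : ser :=
  fun n => \sum_(i < n.+1) s i * t (n - i)%N.
Definition ser_pow (s : ser) (k : nat) : ser := iter k (ser_mul s) ser_one.
Definition ser_divx (s : ser) : ser := fun n => if n is m.+1 then s m else 0.
(* a_x = - sum_{n>=1} n q_n x^{-n-1} *)
Definition ser_dx (s : ser) : ser :=
  fun n => if n is m.+1 then - (m%:R *: s m) else 0.
Definition ser_dy (s : ser) : ser := fun n => (s n)^`().
(* log V = log(1 + u) with u = V - 1 = sum_{k>=1} (-1)^{k+1} u^k / k;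
   since u has zero constant term (for V with constant term 1), u^k only
   contributes to coefficients of index >= k, so the sum is finite. *)
Definition ser_log (s : ser) : ser :=
  fun n => \sum_(1 <= k < n.+1)
     (((-1) ^+ k.+1) / k%:R) *: ser_pow (ser_add s (ser_opp ser_one)) k n.

Definition V_equation (V : ser) : Prop :=
  V = ser_add ser_one (ser_add ser_y_over_x (ser_add (ser_opp (ser_divx V))
       (ser_add (ser_opp (ser_dx V)) (ser_add (ser_opp (ser_divx (ser_dy V)))
          (ser_divx (ser_log V)))))).

(* P_{n-1} = coefficient of x^{-n} in V, i.e. P_m = V_{m+1} *)
Definition Ppoly (V : ser) (m : nat) : {poly C} := V m.+1.
Definition Qpoly (V : ser) (n : nat) : {poly C} := ser_log V n.

(* From p_n(y) = (-1)^{n+1}/n! * sum_{k=0}^n (-1)^k c_{n,k} y^{n-k}: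
   c_{n,k} = (-1)^{n+1+k} n! [y^{n-k}] p_n  for 0 <= k <= n, and 0 otherwise. *)
Definition coef_of (p : nat -> {poly C}) (n : nat) (k : int) : C :=
  match k with
  | Posz k' => if (k' <= n)%N then
                 (-1) ^+ (n.+1 + k') * n`!%:R * (p n)`_(n - k')
               else 0
  | Negz _ => 0
  end.

Definition acoef (V : ser) (n : nat) (k : int) : C :=
  if n is 0 then (if (k == 0) || (k == -1) then 1 else 0)
  else coef_of (Ppoly V) n k.

(* b_{n,k} for n >= 1 (b_{0,k} is never used; set to 0) *)
Definition bcoef (V : ser) (n : nat) (k : int) : C :=
  if n is 0 then 0 else coef_of (Qpoly V) n k.

End Series.

From HB Require Import structures.
From mathcomp Require Import all_boot all_order all_algebra.
From mathcomp Require Import reals.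
From mathcomp.real_closed Require Import complex.
From mathcomp Require Import ring zify.
Import Order.TTheory GRing.Theory Num.Theory.
Local Open Scope ring_scope.
Local Open Scope complex_scope.

(* Writing P_n, Q_n for the coefficients of V and log V as in the statement,
   the defining equation and the identities V (log V)_y = V_y and
   V x (log V)_x = x V_x, valid for any series with constant term 1, yield
   by a joint induction
     P_(n+1)' = P_n' - n P_n,   Q_(n+1)' = Q_n' - n Q_n,   Q_n = P_n + P_n'
   (the last two for n >= 1), together with deg P_n <= n.  Comparing the
   coefficients of y^(n-k) in these relations gives the first three
   identities; the fourth is the constant term of V x (log V)_x = x V_x.
   The identities between series are proved on truncations, inside
   {poly {poly C}}, where log (1 + u) is a polynomial in u. *)

Arguments ser_pow : simpl never.

Section Truncation.
Context {C : fieldType}.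
Implicit Types (s t : ser C) (q : {poly {poly C}}).

Definition trunc (K : nat) s : {poly {poly C}} := \poly_(i < K) s i.

Lemma coef_trunc K s i : (trunc K s)`_i = if (i < K)%N then s i else 0.
Proof. exact: coef_poly. Qed.

Lemma ser_mul_truncl K s t q n : (n < K)%N ->
  (forall m, (m < K)%N -> t m = q`_m) -> ser_mul s t n = (trunc K s * q)`_n.
Proof.
move=> nK tq; rewrite /ser_mul coefM; apply: eq_bigr => i _.
have iK : (i < K)%N by apply: leq_ltn_trans nK; rewrite -ltnS.
by rewrite coef_trunc iK tq // (leq_ltn_trans (leq_subr i n) nK).
Qed.

Lemma ser_mul_trunc K s t n : (n < K)%N ->
  ser_mul s t n = (trunc K s * trunc K t)`_n.
Proof. by move=> nK; apply: ser_mul_truncl => // m mK; rewrite coef_trunc mK. Qed.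

Lemma ser_mulC s t n : ser_mul s t n = ser_mul t s n.
Proof. by rewrite !(ser_mul_trunc n.+1) // mulrC. Qed.

Lemma ser_pow_trunc K s k n : (n < K)%N -> ser_pow s k n = ((trunc K s) ^+ k)`_n.
Proof.
elim: k n => [|k IHk] n nK; first by rewrite expr0 coef1; case: n nK.
by rewrite exprS /ser_pow iterS; apply: ser_mul_truncl => // m; apply: IHk.
Qed.
End Truncation.

Section PowerValuation.
Context {R : nzRingType}.

Lemma coef_exp_valuation (p : {poly R}) k n : p`_0 = 0 -> (n < k)%N -> (p ^+ k)`_n = 0.
Proof.
move=> p0; elim: k n => [|k IHk] n // nk.
rewrite exprS coefM big_ord_recl p0 mul0r add0r big1 // => i _.
by rewrite IHk ?mulr0 //= /bump /= add1n; case: i => i /= ilt; lia.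
Qed.

Lemma coef_mul_exp_valuation (p q : {poly R}) k n :
  q`_0 = 0 -> (n < k)%N -> (p * q ^+ k)`_n = 0.
Proof.
move=> q0 nk; rewrite coefM big1 // => j _.
by rewrite coef_exp_valuation ?mulr0 // (leq_ltn_trans (leq_subr j n)).
Qed.
End PowerValuation.

Section Log1p.
Context {F : numFieldType} {R : comNzRingType} (c : {rmorphism F -> R}).

Definition log1p_trunc N (u : R) : R :=
  \sum_(k < N) c ((-1) ^+ k.+2 / k.+1%:R) * u ^+ k.+1.

Variable d : R -> R.
Hypothesis d_add : {morph d : p q / p + q}.
Hypothesis d_mul : forall p q, d (p * q) = d p * q + p * d q.
Hypothesis d_const : forall a, d (c a) = 0.

Lemma derivation0 : d 0 = 0.
Proof. by apply: (addrI (d 0)); rewrite -d_add !addr0. Qed.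

Lemma derivationX q k : d (q ^+ k.+1) = q ^+ k * d q *+ k.+1.
Proof.
elim: k => [|k IHk]; first by rewrite expr1 expr0 mul1r.
by rewrite exprS d_mul IHk exprS; ring.
Qed.

Lemma derivation_log1p_trunc N u :
  (1 + u) * d (log1p_trunc N u) = d u - d u * (- u) ^+ N.
Proof.
elim: N => [|N IHN]; first by rewrite /log1p_trunc big_ord0 derivation0 mulr0 expr0 mulr1 subrr.
rewrite /log1p_trunc big_ord_recr /= -/(log1p_trunc N u) d_add mulrDr IHN d_mul d_const.
rewrite mul0r add0r derivationX.
have cN : c ((-1) ^+ N.+2 / N.+1%:R) * N.+1%:R = (-1) ^+ N.
  by rewrite -(rmorph_nat c) -rmorphM divfK ?pnatr_eq0 // rmorphXn rmorphN1 !exprS; ring.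
have -> : c ((-1) ^+ N.+2 / N.+1%:R) * (u ^+ N * d u *+ N.+1) = (- u) ^+ N * d u.
  by rewrite -[u ^+ N * d u *+ N.+1]mulr_natr [(- u) ^+ N]exprNn -cN; ring.
by rewrite exprSr; ring.
Qed.
End Log1p.

Section FormalLog.
Context {C : numFieldType}.
Implicit Types (p q : {poly {poly C}}).

Definition polyCC : {rmorphism C -> {poly {poly C}}} := polyC \o polyC.

(* The outer variable of [{poly {poly C}}] stands for [1/x], so [euler_deriv]
   is [- x d/dx] and [deriv_coefs] is [d/dy]. *)
Definition euler_deriv p := 'X * p^`().
Definition deriv_coefs p := map_poly (@deriv C) p.

Lemma coef_euler_deriv p m : (euler_deriv p)`_m = p`_m *+ m.
Proof. by rewrite /euler_deriv coefXM; case: m => [|m]; rewrite ?mulr0n ?coef_deriv. Qed.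

Lemma coef_deriv_coefs p m : (deriv_coefs p)`_m = (p`_m)^`().
Proof. by rewrite coef_map_id0 // deriv0. Qed.

Lemma euler_derivD : {morph euler_deriv : p q / p + q}.
Proof. by move=> p q; rewrite /euler_deriv derivD mulrDr. Qed.

Lemma euler_derivM p q : euler_deriv (p * q) = euler_deriv p * q + p * euler_deriv q.
Proof. by rewrite /euler_deriv derivM; ring. Qed.

Lemma euler_deriv_const a : euler_deriv (polyCC a) = 0.
Proof. by rewrite /euler_deriv derivC mulr0. Qed.

Lemma deriv_coefsD : {morph deriv_coefs : p q / p + q}.
Proof. by move=> p q; apply/polyP => i; rewrite coefD !coef_deriv_coefs coefD derivD. Qed.

Lemma deriv_coefsM p q : deriv_coefs (p * q) = deriv_coefs p * q + p * deriv_coefs q.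
Proof.
apply/polyP => i; rewrite coefD !coef_deriv_coefs !coefM linear_sum -big_split /=.
by apply: eq_bigr => j _; rewrite derivM !coef_deriv_coefs.
Qed.

Lemma deriv_coefs_const a : deriv_coefs (polyCC a) = 0.
Proof. by apply/polyP => i; rewrite coef_deriv_coefs coef0 coefC; case: eqP; rewrite ?derivC. Qed.

Context {s : ser C}.
Hypothesis s0 : s 0 = 1.
Let u := ser_add s (ser_opp (ser_one C)).

Lemma coef0_trunc_sub1 K : (trunc K u)`_0 = 0.
Proof. by rewrite coef_trunc /u /ser_add /ser_opp /= s0 subrr; case: ifP. Qed.

Lemma trunc_sub1K K : (0 < K)%N -> 1 + trunc K u = trunc K s.
Proof.
move=> K0; apply/polyP => -[|i]; rewrite coefD coef1 !coef_trunc /u /ser_add /ser_opp /=.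
  by rewrite K0 s0 subrr addr0.
by case: ifP; rewrite ?add0r ?subr0.
Qed.

Lemma coef_log1p_trunc K N m : (m < K)%N -> (m <= N)%N ->
  (log1p_trunc polyCC N (trunc K u))`_m = ser_log s m.
Proof.
move=> mK mN; rewrite /log1p_trunc coef_sum /ser_log big_add1 /= big_mkord.
rewrite (bigID (fun k : 'I_N => (k < m)%N)) /= [X in _ + X]big1 ?addr0; last first.
  move=> k; rewrite -leqNgt => km; rewrite /polyCC /= coefCM.
  by rewrite coef_exp_valuation ?mulr0 ?coef0_trunc_sub1.
rewrite -(big_ord_widen _ (fun k => (polyCC ((-1) ^+ k.+2 / k.+1%:R) * trunc K u ^+ k.+1)`_m)) //.
by apply: eq_bigr => k _; rewrite /polyCC /= coefCM mul_polyC (ser_pow_trunc K).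
Qed.

(* For a derivation [d] acting on coefficients through [f], this is the
   identity [s * d (log s) = d s], read off at [x^-n]. *)
Lemma ser_mul_derivation_log (d : {poly {poly C}} -> {poly {poly C}})
    (f : nat -> {poly C} -> {poly C}) n :
  {morph d : p q / p + q} ->
  (forall p q, d (p * q) = d p * q + p * d q) ->
  (forall a, d (polyCC a) = 0) ->
  (forall p m, (d p)`_m = f m p`_m) ->
  ser_mul s (fun m => f m (ser_log s m)) n = f n (u n).
Proof.
move=> d_add d_mul d_const d_coef.
have := congr1 (fun p => p`_n) (derivation_log1p_trunc polyCC d d_add d_mul d_const n.+1 (trunc n.+1 u)).
rewrite /= trunc_sub1K // coefB coef_mul_exp_valuation ?coefN ?coef0_trunc_sub1 ?oppr0 ?subr0 //.
rewrite d_coef coef_trunc ltnSn addr0 => <-; apply: ser_mul_truncl => // m mn.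
by rewrite d_coef coef_log1p_trunc // ltnW.
Qed.

Lemma ser_mul_euler_log n :
  ser_mul s (fun m => ser_log s m *+ m) n = s n *+ n.
Proof.
rewrite (@ser_mul_derivation_log euler_deriv (fun m (p : {poly C}) => p *+ m)) //.
- by rewrite /u /ser_add /ser_opp /=; case: n => [|n]; rewrite ?mulr0n ?subr0.
- exact: euler_derivD.
- exact: euler_derivM.
- exact: euler_deriv_const.
- exact: coef_euler_deriv.
Qed.

Lemma ser_mul_deriv_log n :
  ser_mul s (fun m => (ser_log s m)^`()) n = (s n)^`().
Proof.
rewrite (@ser_mul_derivation_log deriv_coefs (fun _ (p : {poly C}) => p^`())) //.
- by rewrite /u /ser_add /ser_opp /= derivB; case: n => [|n]; rewrite ?derivC subr0.
- exact: deriv_coefsD.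
- exact: deriv_coefsM.
- exact: deriv_coefs_const.
- exact: coef_deriv_coefs.
Qed.
End FormalLog.

Section CoefOf.
Context {C : numFieldType}.
Implicit Types p q : nat -> {poly C}.

Lemma coef_ofE p {n k : nat} : (k <= n)%N ->
  coef_of p n k = (-1) ^+ (n.+1 + k) * n`!%:R * (p n)`_(n - k).
Proof. by move=> kn; rewrite /coef_of kn. Qed.

Lemma coef_of_N1 p n : coef_of p n (0%:Z - 1) = 0.
Proof. by []. Qed.

Lemma coef_of_pred p n (k : nat) : coef_of p n (k.+1%:Z - 1) = coef_of p n k.
Proof. by rewrite -addn1 PoszD addrK. Qed.

Lemma coef_of_diag p n : coef_of p n n = - n`!%:R * (p n)`_0.
Proof.
rewrite coef_ofE // subnn -signr_odd addSn /= addnn odd_double /=; ring.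
Qed.

Lemma coef_of_recurrence p m k : (k <= m)%N ->
  (p m.+1)^`() = (p m)^`() - p m *+ m -> (p m)`_m.+1 = 0 ->
  coef_of p m.+1 k = m.+1%:R * coef_of p m (k%:Z - 1)
                     + (m.+1 * (m.+1 - 1))%:R / (m.+1 - k)%:R * coef_of p m k.
Proof.
move=> km p_rec p_top.
have p_coef j : (p m.+1)`_j.+1 = ((p m)`_j.+1 *+ j.+1 - (p m)`_j *+ m) / j.+1%:R.
  have := congr1 (fun q : {poly C} => q`_j) p_rec.
  rewrite coefB coefMn !coef_deriv => <-.
  by rewrite -[X in X / _]mulr_natr mulfK ?pnatr_eq0.
rewrite subSS subn0.
case: k km => [|k] km.
  rewrite coef_of_N1 mulr0 add0r !coef_ofE // !subn0 !addn0 p_coef p_top !exprS factS natrM.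
  by field; rewrite addrC natr1 pnatr_eq0.
rewrite coef_of_pred (coef_ofE _ km) (coef_ofE _ (ltnW km)) (coef_ofE _ (leqW km)) subSS.
have ->: (m - k = (m - k.+1).+1)%N by rewrite subnS prednK // subn_gt0.
rewrite p_coef !addSn !addnS !exprS factS natrM.
by field; rewrite addrC natr1 pnatr_eq0.
Qed.

Lemma coef_of_add_deriv p q n k : (k <= n)%N ->
  q n = p n + (p n)^`() -> (p n)`_n.+1 = 0 ->
  coef_of p n k = coef_of q n k + (n - k + 1)%:R * coef_of p n (k%:Z - 1).
Proof.
move=> kn q_def p_top; case: k kn => [|k] kn.
  by rewrite coef_of_N1 mulr0 addr0 !coef_ofE // q_def subn0 coefD coef_deriv p_top mul0rn addr0.
rewrite coef_of_pred !(coef_ofE _ kn) (coef_ofE _ (ltnW kn)) q_def coefD coef_deriv.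
have ->: (n - k = (n - k.+1).+1)%N by rewrite subnS prednK // subn_gt0.
rewrite addn1 !addSn !addnS !exprS; ring.
Qed.
End CoefOf.

Section Coefficients.
Context {C : numFieldType} (V : ser C).
Hypothesis V_in_A : in_A V.
Hypothesis V_eq : V_equation V.
Local Notation L := (ser_log V).

Lemma V0 : V 0 = 1.
Proof.
have := congr1 (fun s => s 0%N) V_eq; rewrite /ser_add /ser_opp /ser_one /ser_y_over_x /=.
by move=> ->; rewrite !oppr0 !addr0.
Qed.

Lemma V_succE n :
  V n.+1 = (if n == 0%N then 'X else 0) + V n *+ n - V n - (V n)^`() + L n.
Proof.
have := congr1 (fun s => s n.+1) V_eq.
rewrite /ser_add /ser_opp /ser_one /ser_y_over_x /ser_divx /ser_dx /ser_dy /= eqSS.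
by move=> ->; rewrite opprK scaler_nat add0r; ring.
Qed.

Lemma log0 : L 0 = 0.
Proof. by rewrite /ser_log big_geq. Qed.

Lemma V1 : V 1 = 'X - 1.
Proof. by rewrite V_succE /= log0 V0 derivC; ring. Qed.

Lemma euler_log n : \sum_(i < n.+1) V i * (L (n - i)%N *+ (n - i)) = V n *+ n.
Proof. exact: (ser_mul_euler_log V0 n). Qed.

Lemma deriv_log n : \sum_(i < n.+1) V i * (L (n - i)%N)^`() = (V n)^`().
Proof. exact: (ser_mul_deriv_log V0 n). Qed.

Lemma log1 : L 1 = V 1.
Proof.
have := euler_log 1; rewrite !big_ord_recr big_ord0 /= log0 V0.
by rewrite subn0 subnn !mulr0n mulr0 add0r mul1r mulr1n addr0.
Qed.

(* The defects of [V_(n+1)' = V_n' - (n - 1) V_n] and of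
   [L_(n+1)' = L_n' - n L_n + [n = 0]], where [L = log V].  Each determines the
   next one: [V_defect_succ] is the y-derivative of the defining equation, and
   [V * log_defect = V_defect] follows from [V * (log V)_y = V_y] and
   [V * x (log V)_x = x V_x]; so both vanish by induction. *)
Definition V_defect n := (V n.+1)^`() - (V n)^`() + V n *+ n - V n.
Definition log_defect n := (L n.+1)^`() - (L n)^`() + L n *+ n - (n == 0%N)%:R.

Lemma V_defect_succ n : V_defect n.+1 = V_defect n *+ n - (V_defect n)^`() + log_defect n.
Proof.
rewrite /V_defect /log_defect (V_succE n.+1) (V_succE n).
rewrite !derivD !derivN !derivMn !derivD !derivN !derivMn.
by case: n => [|n] /=; rewrite ?derivX ?derivC ?deriv0; move: (V _) (L _) (L _.+1) => a b c; ring.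
Qed.

Lemma V_mul_log_defect n : \sum_(i < n.+1) V i * log_defect (n - i) = V_defect n.
Proof.
have dlogS : \sum_(i < n.+1) V i * (L (n - i).+1)^`() = (V n.+1)^`().
  rewrite -(deriv_log n.+1) [in RHS]big_ord_recr /= subnn log0 deriv0 mulr0 addr0.
  by apply: eq_bigr => i _; rewrite subSn // -ltnS.
under eq_bigr => i _ do rewrite /log_defect mulrBr mulrDr mulrBr.
rewrite sumrB big_split /= sumrB dlogS deriv_log euler_log.
rewrite big_ord_recr /= subnn mulr1 big1 ?add0r // => i _.
by rewrite subn_eq0 leqNgt ltn_ord mulr0.
Qed.

Lemma defects_eq0 n : V_defect n = 0 /\ log_defect n = 0.
Proof.
elim/ltn_ind: n => -[|n] IH.
  rewrite /V_defect /log_defect log1 V1 V0 log0 /=.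
  by rewrite !derivD !derivN derivX derivC deriv0; split; ring.
have V_defectS : V_defect n.+1 = 0.
  by rewrite V_defect_succ; case: (IH n (ltnSn n)) => -> ->; rewrite deriv0 mul0rn subr0 addr0.
split=> //; have := V_mul_log_defect n.+1.
rewrite V_defectS big_ord_recl subn0 V0 mul1r big1 ?addr0 // => i _.
by case: (IH (n - i)%N); rewrite ?subSS ?ltnS ?leq_subr // => _ ->; rewrite mulr0.
Qed.

Lemma deriv_V_succ n : (V n.+1)^`() = (V n)^`() - V n *+ n + V n.
Proof.
apply/eqP; rewrite -subr_eq0 -(defects_eq0 n).1 /V_defect; apply/eqP.
by move: (V n.+1)^`() ((V n)^`()) (V n) => a b c; ring.
Qed.

Lemma deriv_log_succ n : (0 < n)%N -> (L n.+1)^`() = (L n)^`() - L n *+ n.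
Proof.
case: n => // n _; apply/eqP; rewrite -subr_eq0 -(defects_eq0 n.+1).2 /log_defect /=.
by rewrite subr0; apply/eqP; move: (L n.+2)^`() ((L n.+1)^`()) (L n.+1) => a b c; ring.
Qed.

Lemma log_V n : (0 < n)%N -> L n = V n.+1 + (V n.+1)^`().
Proof.
rewrite deriv_V_succ (V_succE n); case: n => // n _ /=.
by move: (V n.+1) (L n.+1) ((V n.+1)^`()) => a b c; ring.
Qed.

Lemma coef_top_V n : (0 < n)%N -> (V n.+1)`_n.+1 = 0.
Proof.
have top_in_A m : (V m)`_m.+1 = 0 by apply: nth_default; apply: V_in_A.
elim: n => // n IHn _.
have := congr1 (fun p : {poly C} => p`_n.+1) (deriv_V_succ n.+1).
have cancel (c : C) : c *- n.+1 + c = - (c *+ n) by rewrite mulrSr opprD addrNK.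
rewrite coefD coefB coefMn !coef_deriv top_in_A mul0rn sub0r {}cancel.
have -> : (V n.+1)`_n.+1 *+ n = 0 by case: n IHn => [|n] IHn; rewrite ?mulr0n ?IHn ?mul0rn.
by rewrite oppr0 -mulr_natr => /eqP; rewrite mulf_eq0 pnatr_eq0 orbF => /eqP.
Qed.

Lemma coef_top_log n : (0 < n)%N -> (L n)`_n.+1 = 0.
Proof.
move=> n0; rewrite log_V // coefD coef_deriv coef_top_V //.
by rewrite nth_default ?mul0rn ?addr0 //; apply: V_in_A.
Qed.

Lemma coef_V2 : (V 2)`_1 = 1.
Proof.
have := congr1 (fun p : {poly C} => p`_0) (deriv_V_succ 1).
by rewrite coef_deriv V1 mulr1n subrK derivB derivX derivC subr0 coef1.
Qed.

Lemma deriv_Ppoly_succ m : (Ppoly V m.+1)^`() = (Ppoly V m)^`() - Ppoly V m *+ m.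
Proof. by rewrite /Ppoly deriv_V_succ mulrSr opprD addrA addrNK. Qed.

Lemma acoef_diag j : acoef V j j = - j`!%:R * (V j.+1)`_0.
Proof.
case: j => [|j]; last exact: coef_of_diag.
by rewrite V1 coefB coefX coef1 /= fact0; ring.
Qed.

Lemma bcoef_diag j : (0 < j)%N -> bcoef V j j = - j`!%:R * (L j)`_0.
Proof. by case: j => // j _; apply: coef_of_diag. Qed.

Lemma acoef_recurrence n k : (1 <= n)%N -> (k < n)%N ->
  acoef V n k = n%:R * acoef V n.-1 (k%:Z - 1)
                + (n * (n - 1))%:R / (n - k)%:R * acoef V n.-1 k.
Proof.
case: n => [|[|m]] // _ kn.
  case: k kn => // _; rewrite /= /Ppoly coef_V2 addn0 sqrrN expr1n subnn muln0.
  by rewrite subn0 factS fact0 muln1 !mul1r !mulr1 mul0r addr0.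
rewrite [m.+2.-1]/= /acoef; apply: coef_of_recurrence => //; first exact: deriv_Ppoly_succ.
exact: coef_top_V.
Qed.

Lemma bcoef_recurrence n k : (2 <= n)%N -> (k < n)%N ->
  bcoef V n k = n%:R * bcoef V n.-1 (k%:Z - 1)
                + (n * (n - 1))%:R / (n - k)%:R * bcoef V n.-1 k.
Proof.
case: n => [|[|m]] // _ kn.
rewrite [m.+2.-1]/= /bcoef; apply: coef_of_recurrence => //; first exact: deriv_log_succ.
exact: coef_top_log.
Qed.

Lemma acoef_bcoef n k : (1 <= n)%N -> (k <= n)%N ->
  acoef V n k = bcoef V n k + (n - k + 1)%:R * acoef V n (k%:Z - 1).
Proof.
case: n => // m _ kn; rewrite /acoef /bcoef; apply: coef_of_add_deriv => //; first exact: log_V.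
exact: coef_top_V.
Qed.

Lemma euler_log_coef0 n :
  \sum_(i < n.+1) (L i)`_0 *+ i * (V (n - i)%N)`_0 = (V n)`_0 *+ n.
Proof.
rewrite -coefMn -(ser_mul_euler_log V0 n) ser_mulC /ser_mul coef_sum.
by apply: eq_bigr => i _; rewrite coef0M coefMn.
Qed.

Lemma bcoef_diag_convolution n : (1 <= n)%N ->
  bcoef V n n = n%:R * acoef V n.-1 n.-1
    + \sum_(1 <= k < n) 'C(n - 1, k)%:R * k%:R * bcoef V k k
                         * acoef V (n - k - 1) (n - k - 1)%N.
Proof.
case: n => // m _; rewrite succnK bcoef_diag // acoef_diag big_add1 big_mkord succnK subSS subn0.
pose c i := (L i)`_0 *+ i * (V (m.+1 - i)%N)`_0.
have top : (L m.+1)`_0 *+ m.+1 = (V m.+1)`_0 *+ m.+1 - \sum_(i < m) c i.+1.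
  have := euler_log_coef0 m.+1; rewrite big_ord_recr big_ord_recl /= subnn V0 coef1 mulr1.
  rewrite mulr0n mul0r add0r => <-.
  rewrite (eq_bigr (fun i : 'I_m => c i.+1)) => [|i _]; last by rewrite /bump /= add1n.
  by rewrite [_ + (L _)`_0 *+ _]addrC addrK.
have term i : (i < m)%N -> 'C(m, i.+1)%:R * i.+1%:R * bcoef V i.+1 i.+1
      * acoef V (m.+1 - i.+1 - 1)%N (m.+1 - i.+1 - 1)%N = m`!%:R * c i.+1.
  move=> im; have -> : (m.+1 - i.+1 - 1 = m - i.+1)%N by lia.
  rewrite bcoef_diag // acoef_diag -subSn // /c subSS -(bin_fact im) !natrM.
  by move: ((L i.+1)`_0) ((V (m - i)%N)`_0) => a b; ring.
rewrite (eq_bigr (fun i : 'I_m => m`!%:R * c i.+1)) => [|i _]; last exact: term.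
have -> : 1 *- (m.+1)`! * (L m.+1)`_0 = - m`!%:R * ((L m.+1)`_0 *+ m.+1).
  by rewrite factS natrM -mulr_natr; ring.
by rewrite top -mulr_sumr -mulr_natr; ring.
Qed.
End Coefficients.

Theorem theorem4p8 (R : realType) (V : ser R[i]) :
  in_A V -> V_equation V ->
  [/\ (forall n k : nat, (1 <= n)%N -> (k < n)%N ->
         acoef V n k = n%:R * acoef V n.-1 (k%:Z - 1)
                       + (n * (n - 1))%:R / (n - k)%:R * acoef V n.-1 k),
      (forall n k : nat, (2 <= n)%N -> (k < n)%N ->
         bcoef V n k = n%:R * bcoef V n.-1 (k%:Z - 1)
                       + (n * (n - 1))%:R / (n - k)%:R * bcoef V n.-1 k),
      (forall n k : nat, (1 <= n)%N -> (k <= n)%N ->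
         acoef V n k = bcoef V n k + (n - k + 1)%:R * acoef V n (k%:Z - 1)) &
      (forall n : nat, (1 <= n)%N ->
         bcoef V n n = n%:R * acoef V n.-1 n.-1
           + \sum_(1 <= k < n) 'C(n - 1, k)%:R * k%:R * bcoef V k k
                                * acoef V (n - k - 1) (n - k - 1)%N)].
Proof.
move=> V_in_A V_eq; split.
- exact: acoef_recurrence.
- exact: bcoef_recurrence.
- exact: acoef_bcoef.
- exact: bcoef_diag_convolution.
Qed.
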